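(* For all integers $s\ge k\ge 3$ there is a constant $C=C(k,s)>0$ such that for every integer $n\ge 2$, $$ f_{s,s+1}^{(k)}(n)\le C(\log n)^{1/(k-2)}. $$ Equivalently, for every $n\ge 2$ there is a $K_{s+1}^{(k)}$-free $k$-uniform hypergraph on $n$ vertices in which every set of at least $C(\log n)^{1/(k-2)}$ vertices contains a copy of $K_s^{(k)}$.
   Context: For integers $k\le s<t$ and $n\ge 0$, $f_{s,t}^{(k)}(n)$ is defined as $$ f_{s,t}^{(k)}(n)=\min_{\mathcal{G}} \max\{ |W| : W\subseteq V(\mathcal{G}) \text{ and the induced subhypergraph } \mathcal{G}[W] \text{ contains no copy of } K_s^{(k)}\}, $$ where the minimum is over all $k$-uniform hypergraphs $\mathcal{G}$ on $n$ vertices containing no copy of $K_t^{(k)}$, and $K_r^{(k)}$ denotes the complete $k$-uniform hypergraph on $r$ vertices. All logarithms are natural logarithms. *)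

From mathcomp Require Import all_boot.
Set Implicit Arguments. Unset Strict Implicit. Unset Printing Implicit Defensive.

Definition kuniform (k n : nat) (G : {set {set 'I_n}}) : bool :=
  [forall e in G, #|e| == k].

Definition has_clique (k n : nat) (G : {set {set 'I_n}}) (t : nat)
  (W : {set 'I_n}) : bool :=
  [exists S : {set 'I_n}, (S \subset W) && (#|S| == t) &&
     [forall e : {set 'I_n}, ((e \subset S) && (#|e| == k)) ==> (e \in G)]].

(* f_{s,t}^{(k)}(n): min over K_t-free k-uniform G on n vertices of the
   largest W with G[W] K_s-free.  (The default value n of the min is never
   attained spuriously: the empty hypergraph is admissible and all values
   are <= n.) *)
Definition f_kst (k s t n : nat) : nat :=
  \big[minn/n]_(G : {set {set 'I_n}} | kuniform k G && ~~ has_clique k G t setT)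
     \max_(W : {set 'I_n} | ~~ has_clique k G s W) #|W|.

(* Colour the (k-1)-subsets of [n] with r = s - k + 2 colours and let a k-set be
   an edge iff deleting either of its two largest elements leaves (k-1)-sets of
   different colours.  In an (s+1)-set, the r + 1 sets made of its k - 2 smallest
   elements and one further element cannot all get different colours, and two of
   the same colour span a non-edge: there is no K_{s+1}.  An s-set S is a clique
   as soon as it is "patterned", i.e. every (k-1)-subset f of S gets the colour
   #{z in S \ f below max f}.  An M-set W contains about M^(k-1) s-sets pairwise
   sharing fewer than k - 1 points; their (k-1)-shadows are disjoint, so at most a
   fraction (1 - r^(-C(s,k-1)))^(c M^(k-1)) of the colourings leave all of them
   unpatterned.  A union bound over the at most n^M sets W gives a colouring whose
   every M-set contains a K_s as soon as M^(k-2) >> log n. *)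

From mathcomp Require Import all_boot zify.
From Stdlib Require Import Reals Lra.
(* Reals rebinds [^] on [nat] to [Nat.pow]; restore ssrnat's [expn]. *)
Import ssrnat.

Set Implicit Arguments.
Unset Strict Implicit.
Unset Printing Implicit Defensive.

Lemma leq_card_bigcup (I T : finType) (P : pred I) (F : I -> {set T}) :
  #|\bigcup_(i | P i) F i| <= \sum_(i | P i) #|F i|.
Proof.
apply: (big_ind2 (fun (A : {set T}) m => #|A| <= m)) => [|A1 m1 A2 m2 le1 le2|//].
  by rewrite cards0.
exact: leq_trans (leq_card_setU A1 A2).1 (leq_add le1 le2).
Qed.

Lemma geq_bigmin_cond (T : finType) (P : pred T) (F : T -> nat) d i0 :
  P i0 -> \big[minn/d]_(i | P i) F i <= F i0.
Proof.
move=> Pi0; have : i0 \in index_enum T by rewrite mem_index_enum.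
elim: (index_enum T) => // j r IH; rewrite in_cons big_cons => /predU1P [<-|ri0].
  by rewrite Pi0 geq_minl.
by case: (P j); rewrite ?(leq_trans (geq_minr _ _)) ?(IH ri0).
Qed.

Lemma pigeonhole (T T' : finType) (f : T -> T') (A : {pred T}) : #|T'| < #|A| ->
  exists x y, [/\ x \in A, y \in A, x != y & f x = f y].
Proof.
move=> ltA; case: (boolP [exists x in A, exists y in A, (x != y) && (f x == f y)]).
  by move=> /exists_inP [x xA /exists_inP [y yA /andP [nxy /eqP fxy]]]; exists x, y.
move=> noColl; suff : #|A| <= #|T'| by rewrite leqNgt ltA.
apply: (leq_card_in f) => x y xA yA fxy; apply/eqP; apply: contraR noColl => nxy.
by apply/exists_inP; exists x => //; apply/exists_inP; exists y => //; rewrite nxy fxy eqxx.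
Qed.

Lemma exists_initial_subset n (B : {set 'I_n}) j : j <= #|B| ->
  exists A : {set 'I_n}, [/\ A \subset B, #|A| = j &
    forall a b, a \in A -> b \in B :\: A -> a < b].
Proof.
elim: j => [|j IH] hj.
  by exists set0; split; rewrite ?sub0set ?cards0 // => a b; rewrite in_set0.
have [A [sAB cardA lowA]] := IH (ltnW hj).
have [b0 b0BA] : exists b0, b0 \in B :\: A.
  by apply/set0Pn; rewrite -card_gt0 cardsD (setIidPr sAB) cardA subn_gt0.
have [b bBA bmin] := arg_minnP val b0BA.
exists (b |: A); split.
- by rewrite subUset sub1set sAB andbT; case/setDP: bBA.
- by rewrite cardsU1 cardA; case/setDP: bBA => _ ->.
- move=> a c; rewrite in_setU1 setDUr => /predU1P [-> | aA] /setIP [cBb cBA].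
    have ncb : c != b by move: cBb; rewrite in_setD in_set1 => /andP [].
    by rewrite ltn_neqAle bmin // andbT eq_sym (inj_eq val_inj).
  exact: lowA.
Qed.

Lemma leq_expn2r m n e : m <= n -> m ^ e <= n ^ e.
Proof. by move=> le_mn; elim: e => // e IH; rewrite !expnS leq_mul. Qed.

Lemma leq_bin_exp M j : 'C(M, j) <= M ^ j.
Proof.
apply: (@leq_trans (M ^_ j)); first by rewrite -bin_ffact leq_pmulr ?fact_gt0.
elim: j M => // j IH M; rewrite ffactnS expnS leq_mul //.
exact: leq_trans (IH _) (leq_expn2r j (leq_pred M)).
Qed.

Lemma leq_exp_ffact a j M : a + j <= M.+1 -> a ^ j <= M ^_ j.
Proof.
elim: j a M => // j IH a M le_aj; rewrite ffactnS expnS.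
case: M le_aj => [|M] le_aj; first by have -> : a = 0 by lia.
apply: leq_mul; [lia | apply: IH; rewrite /=; lia].
Qed.

(* [M <= s * (M - s + 1)] for [0 < s <= M], and [(M - s + 1) ^ s <= M ^_ s = s`! * 'C(M, s)]. *)
Lemma leq_exp_bin s M : 0 < s -> s <= M -> M ^ s <= s`! * s ^ s * 'C(M, s).
Proof.
move=> s_gt0 le_sM.
apply: (@leq_trans ((s * (M - s).+1) ^ s)); first by apply: leq_expn2r; nia.
rewrite expnMn (mulnC s`!) -mulnA leq_mul // mulnC bin_ffact.
by apply: leq_exp_ffact; lia.
Qed.

Lemma bernoulli_expn y j : y ^ j.+1 + j.+1 * y ^ j <= y.+1 ^ j.+1.
Proof.
elim: j => [|j IH]; first by rewrite !expn1 expn0; lia.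
apply: leq_trans (leq_mul (leqnn y.+1) IH); rewrite (expnS y j.+1) (expnS y j); nia.
Qed.

Lemma leq_exp_subn1_mul2 x : 0 < x -> (x - 1) ^ x * 2 <= x ^ x.
Proof.
case: x => // y _; rewrite subn1 /=.
by apply: leq_trans (bernoulli_expn y y); rewrite expnS; nia.
Qed.

Lemma leq_card_agree_on (I C : finType) (c0 : C) (D : {set I})
    (g : {ffun I -> C}) (Q : pred {ffun I -> C}) :
  (forall f f' : {ffun I -> C}, (forall i, i \notin D -> f i = f' i) -> Q f = Q f') ->
  #|[set f | Q f]| <= #|C| ^ #|D| * #|[set f | Q f && [forall i in D, f i == g i]]|.
Proof.
move=> Q_indep.
pose restr (f : {ffun I -> C}) : {ffun I -> C} := [ffun i => if i \in D then f i else c0].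
pose overwrite (f : {ffun I -> C}) : {ffun I -> C} := [ffun i => if i \in D then g i else f i].
have restr_on f : Q f -> restr f \in pffun_on c0 D C.
  move=> _; apply/pffun_onP; split=> //; apply/subsetP => i.
  by rewrite inE /restr ffunE; case: (i \in D); rewrite ?eqxx.
rewrite -sum1dep_card (partition_big restr _ restr_on) -(card_pffun_on c0 D C).
rewrite -sum_nat_const; apply: leq_sum => p _; rewrite sum1dep_card.
have inj : {in [set f | Q f && (restr f == p)] &, injective overwrite}.
  move=> f f'; rewrite !inE => /andP [_ /eqP rf] /andP [_ /eqP rf'] eq_ov.
  apply/ffunP => i; case: (boolP (i \in D)) => iD.
    have rff' : restr f = restr f' by rewrite rf rf'.
    by have := congr1 (fun h : {ffun I -> C} => h i) rff'; rewrite !ffunE iD.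
  by have := congr1 (fun h : {ffun I -> C} => h i) eq_ov; rewrite !ffunE (negbTE iD).
rewrite -(card_in_imset inj); apply/subset_leq_card/subsetP => _ /imsetP [f + ->].
rewrite !inE => /andP [Qf _]; apply/andP; split.
  by rewrite -(Q_indep f) // => i iD; rewrite ffunE (negbTE iD).
by apply/forall_inP => i iD; rewrite ffunE iD.
Qed.

Lemma INR_expn m e : INR (m ^ e) = (INR m ^ e)%R.
Proof. by elim: e => [|e IH] //=; rewrite expnS mult_INR IH. Qed.

Lemma ln_ge_log2 n l : 2 ^ l <= n -> (INR l * ln 2 <= ln (INR n))%R.
Proof.
move=> le_pow_n.
have pow_gt0 : (0 < INR (2 ^ l))%R by apply/lt_0_INR/ltP; rewrite expn_gt0.
have pow_le : (INR (2 ^ l) <= INR n)%R by apply/le_INR/leP.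
rewrite INR_expn in pow_gt0 pow_le; rewrite -ln_pow; last lra.
by case: (Rle_lt_or_eq_dec _ _ pow_le) => [lt|->]; [apply/Rlt_le/ln_increasing | lra].
Qed.

Lemma le_Rpower_root a d (B : R) : 0 < d -> (0 < B)%R ->
  (INR a ^ d <= B)%R -> (INR a <= Rpower B (1 / INR d))%R.
Proof.
move=> d_gt0 B_gt0 le_B; case: (posnP a) => [->|a_gt0].
  by apply/Rlt_le/exp_pos.
have a_pos : (0 < INR a)%R by apply/lt_0_INR/ltP.
have d_pos : (0 < INR d)%R by apply/lt_0_INR/ltP.
have -> : INR a = Rpower (INR a ^ d) (1 / INR d).
  rewrite -Rpower_pow // Rpower_mult (_ : INR d * (1 / INR d) = 1)%R ?Rpower_1 //.
  by field; lra.
apply: Rle_Rpower_l; first by apply/Rlt_le/Rdiv_lt_0_compat; lra.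
by split => //; apply: pow_lt.
Qed.

(* With [n >= 2 ^ l] we have [l <= 2 ln n] and [1 <= 2 ln n], since [ln 2 > 1/2]. *)
Lemma root_log_bound d B K : 0 < d ->
  exists C : R, (0 < C)%R /\ forall n l a, 2 <= n -> 2 ^ l <= n ->
    a ^ d <= B + K * l.+1 -> (INR a <= C * Rpower (ln (INR n)) (1 / INR d))%R.
Proof.
move=> d_gt0; set C0 := (INR (2 * B + 4 * K) + 1)%R.
have C0_gt0 : (0 < C0)%R by have := pos_INR (2 * B + 4 * K); rewrite /C0; lra.
exists (Rpower C0 (1 / INR d)); split; first exact: exp_pos.
move=> n l a n_ge2 le_pow_n le_a.
have ln2_gt := ln_lt_2.
have ln_ge : (ln 2 <= ln (INR n))%R.
  by have := @ln_ge_log2 n 1; rewrite expn1 Rmult_1_l; apply.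
have l_le : (INR l <= 2 * ln (INR n))%R.
  have := ln_ge_log2 le_pow_n; have := pos_INR l; nra.
have ln_gt0 : (0 < ln (INR n))%R by lra.
rewrite Rpower_mult_distr //; apply: le_Rpower_root => //; first exact: Rmult_lt_0_compat.
have -> : (INR a ^ d = INR (a ^ d))%R by rewrite INR_expn.
apply: (Rle_trans _ (INR (B + K * l.+1))); first exact/le_INR/leP.
have B_ge0 := pos_INR B; have K_ge0 := pos_INR K.
rewrite /C0 !plus_INR !mult_INR S_INR /=; nra.
Qed.

Lemma card_supersets (T : finType) (W A : {set T}) m :
  #|[set S : {set T} | [&& S \subset W, #|S| == m & A \subset S]]| <= 'C(#|W|, m - #|A|).
Proof.
set E := [set S : {set T} | _].
have inj : {in E &, injective (fun S => S :\: A)}.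
  move=> S1 S2; rewrite !inE => /and3P [_ _ sA1] /and3P [_ _ sA2] eqD.
  apply/setP => z; case: (boolP (z \in A)) => zA.
    by rewrite (subsetP sA1 _ zA) (subsetP sA2 _ zA).
  by move/setP: eqD => /(_ z); rewrite !inE zA.
rewrite -(card_in_imset inj) -cards_draws; apply/subset_leq_card/subsetP => U /imsetP [S + ->{U}].
rewrite !inE => /and3P [sSW /eqP cardS sAS].
by rewrite cardsD (setIidPr sAS) cardS eqxx andbT (subset_trans _ sSW) // subDset subsetUr.
Qed.

Lemma has_clique_mono k n (G : {set {set 'I_n}}) t (W1 W2 : {set 'I_n}) :
  W1 \subset W2 -> has_clique k G t W1 -> has_clique k G t W2.
Proof.
move=> sW12 /existsP [S /andP [/andP [sSW1 cardS] allS]]; apply/existsP; exists S.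
by rewrite (subset_trans sSW1 sW12) cardS allS.
Qed.

Section Construction.
Variables n k s : nat.
Hypothesis k_ge3 : 3 <= k.
Hypothesis k_le_s : k <= s.

Local Notation r := (s - k).+2.
Local Notation colouring := {ffun {set 'I_n} -> 'I_r}.

Definition top_pair (e : {set 'I_n}) (x y : 'I_n) : bool :=
  (x != y) && [forall z in e, [|| z == x, z == y | (z < x) && (z < y)]].

Definition graph_of (chi : colouring) : {set {set 'I_n}} :=
  [set e : {set 'I_n} | (#|e| == k) &&
     [forall x in e, forall y in e, top_pair e x y ==> (chi (e :\ x) != chi (e :\ y))]].

Lemma top_pairC e x y : top_pair e x y = top_pair e y x.
Proof.
rewrite /top_pair eq_sym; congr (_ && _); apply: eq_forallb_in => z _.
by rewrite orbCA andbC.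
Qed.

Lemma graph_of_uniform chi : kuniform k (graph_of chi).
Proof. by apply/forall_inP => e; rewrite inE => /andP []. Qed.

Lemma top_pair_setU2 (A : {set 'I_n}) (b1 b2 : 'I_n) : b1 != b2 ->
  (forall a, a \in A -> (a < b1) && (a < b2)) -> top_pair (b1 |: (b2 |: A)) b1 b2.
Proof.
move=> nb12 lowA; rewrite /top_pair nb12; apply/forall_inP => z.
by rewrite !in_setU1 => /or3P [-> | -> | /lowA ->]; rewrite ?orbT.
Qed.

Lemma graph_of_clique_free chi : ~~ has_clique k (graph_of chi) s.+1 setT.
Proof.
apply/negP => /existsP [T /andP [/andP [_ /eqP cardT] allT]].
have [A [sAT cardA lowA]] : exists A : {set 'I_n}, [/\ A \subset T, #|A| = k - 2 &
    forall a b, a \in A -> b \in T :\: A -> a < b].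
  by apply: exists_initial_subset; rewrite cardT; lia.
have [b1 [b2 [b1T b2T nb12 same]]] : exists b1 b2,
    [/\ b1 \in T :\: A, b2 \in T :\: A, b1 != b2 & chi (b1 |: A) = chi (b2 |: A)].
  by apply: pigeonhole; rewrite card_ord cardsD (setIidPr sAT) cardT cardA; lia.
move: (b1T) (b2T); rewrite !in_setD => /andP [b1A _] /andP [b2A _].
set e := b1 |: (b2 |: A).
have e_edge : e \in graph_of chi.
  apply: (implyP (forallP allT e)); rewrite !subUset !sub1set sAT andbT.
  rewrite (subsetP (subsetDl T A) _ b1T) (subsetP (subsetDl T A) _ b2T) /=.
  by rewrite !cardsU1 in_setU1 negb_or nb12 b1A b2A cardA /=; apply/eqP; lia.
move: e_edge; rewrite inE => /andP [_ /forall_inP /(_ b1 (setU11 _ _))].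
move=> /forall_inP /(_ b2 (setU1r _ (setU11 _ _))).
rewrite top_pair_setU2 // => [|a aA]; last by rewrite !lowA.
have -> : e :\ b1 = b2 |: A by rewrite setU1K // in_setU1 negb_or nb12.
have -> : e :\ b2 = b1 |: A.
  by rewrite /e setUCA setU1K // in_setU1 negb_or eq_sym nb12.
by rewrite same eqxx.
Qed.

Definition below (S f : {set 'I_n}) : {set 'I_n} :=
  [set z in S :\: f | [exists y in f, z < y]].

Definition pattern (S : {set 'I_n}) : colouring := [ffun f => inord #|below S f|].

Definition shadow (S : {set 'I_n}) : {set {set 'I_n}} :=
  [set f : {set 'I_n} | (f \subset S) && (#|f| == k.-1)].

Definition patterned (S : {set 'I_n}) (chi : colouring) : bool :=
  [forall f in shadow S, chi f == pattern S f].

Lemma card_shadow (S : {set 'I_n}) : #|S| = s -> #|shadow S| = 'C(s, k.-1).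
Proof. by move=> cardS; rewrite cards_draws cardS. Qed.

Lemma card_below (S f : {set 'I_n}) :
  #|S| = s -> f \subset S -> #|f| = k.-1 -> #|below S f| < r.
Proof.
move=> cardS sfS cardf; apply: (@leq_ltn_trans #|S :\: f|).
  by apply/subset_leq_card/subsetP => z; rewrite inE => /andP [].
by rewrite cardsD (setIidPr sfS) cardS cardf; lia.
Qed.

(* Deleting the larger top element [y] of [e] instead of [x] only shrinks the
   set of elements lying below the remaining maximum. *)
Lemma below_top_proper (S e : {set 'I_n}) x y : e \subset S -> x \in e -> y \in e ->
  top_pair e x y -> x < y -> below S (e :\ y) \proper below S (e :\ x).
Proof.
move=> sES xe ye /andP [nxy /forall_inP topz] lt_xy; apply/properP; split.
  apply/subsetP => z; rewrite !inE => /andP [/andP [zey zS] /exists_inP [w]].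
  rewrite !inE => /andP [nwy we] lt_zw.
  have lt_zx : z < x.
    case/or3P: (topz w we) => [/eqP <- // | wy | /andP [lt_wx _]].
      by rewrite wy in nwy.
    exact: ltn_trans lt_zw lt_wx.
  have zNe : z \notin e.
    apply: contraTN lt_zx => ze; move: zey; rewrite ze andbT negbK => /eqP ->.
    by rewrite -leqNgt ltnW.
  rewrite zS (negbTE zNe) andbF /=.
  apply/exists_inP; exists y; last exact: ltn_trans lt_zx lt_xy.
  by rewrite !inE eq_sym nxy ye.
exists x.
  rewrite !inE eqxx (subsetP sES _ xe) /=.
  by apply/exists_inP; exists y; rewrite // !inE eq_sym nxy ye.
by rewrite !inE nxy xe.
Qed.

Lemma patterned_edge (S e : {set 'I_n}) chi : #|S| = s -> patterned S chi ->
  e \subset S -> #|e| = k -> e \in graph_of chi.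
Proof.
move=> cardS /forall_inP patS sES cardE; rewrite inE cardE eqxx /=.
have sub_e x : x \in e -> (e :\ x \subset S) /\ #|e :\ x| = k.-1.
  move=> xe; rewrite (subset_trans (subD1set e x) sES).
  by move: cardE; rewrite (cardsD1 x) xe => <-.
have colour x : x \in e -> nat_of_ord (chi (e :\ x)) = #|below S (e :\ x)|.
  move=> xe; have [sxS cardx] := sub_e x xe.
  by rewrite (eqP (patS _ _)) ?ffunE ?inordK ?card_below // inE sxS cardx eqxx.
apply/forall_inP => x xe; apply/forall_inP => y ye; apply/implyP => top_xy.
apply/negP => /eqP /(congr1 val) /=; rewrite (colour x xe) (colour y ye) => eq_card.
case: (ltngtP x y) => [lt_xy | lt_yx | eq_xy].
- by have := proper_card (below_top_proper sES xe ye top_xy lt_xy); rewrite eq_card ltnn.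
- rewrite top_pairC in top_xy.
  by have := proper_card (below_top_proper sES ye xe top_xy lt_yx); rewrite eq_card ltnn.
- by move: top_xy; rewrite /top_pair (val_inj eq_xy) eqxx.
Qed.

Lemma patterned_has_clique (S W : {set 'I_n}) chi :
  S \subset W -> #|S| = s -> patterned S chi -> has_clique k (graph_of chi) s W.
Proof.
move=> sSW cardS patS; apply/existsP; exists S; rewrite sSW cardS eqxx /=.
apply/forallP => e; apply/implyP => /andP [sES /eqP cardE].
exact: patterned_edge patS sES cardE.
Qed.

Definition packing (W : {set 'I_n}) (P : {set {set 'I_n}}) : bool :=
  [forall S in P, (S \subset W) && (#|S| == s)] &&
  [forall S in P, forall S' in P, (S != S') ==> (#|S :&: S'| < k.-1)].

Lemma packingP (W : {set 'I_n}) (P : {set {set 'I_n}}) : reflect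
  ({in P, forall S : {set 'I_n}, S \subset W /\ #|S| = s} /\
   {in P &, forall S S' : {set 'I_n}, S != S' -> #|S :&: S'| < k.-1})
  (packing W P).
Proof.
apply: (iffP andP) => [[/forall_inP sizeP /forall_inP meetP] | [sizeP meetP]]; split.
- by move=> S /sizeP /andP [-> /eqP].
- by move=> S S' SP S'P; apply/implyP; apply: (forall_inP (meetP S SP)).
- by apply/forall_inP => S /sizeP [sSW ->]; rewrite sSW eqxx.
- by apply/forall_inP => S SP; apply/forall_inP => S' S'P; apply/implyP; apply: meetP.
Qed.

Lemma packingS (W : {set 'I_n}) (P Q : {set {set 'I_n}}) :
  Q \subset P -> packing W P -> packing W Q.
Proof.
move=> /subsetP sQP /packingP [sizeP meetP]; apply/packingP; split.
  by move=> S /sQP; apply: sizeP.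
by move=> S S' /sQP SP /sQP S'P; apply: meetP.
Qed.

Definition max_packing (W : {set 'I_n}) : {set {set 'I_n}} :=
  [arg max_(P > set0 | packing W P) #|P|].

Lemma max_packingP (W : {set 'I_n}) :
  packing W (max_packing W) /\ forall P, packing W P -> #|P| <= #|max_packing W|.
Proof.
rewrite /max_packing; case: arg_maxnP => [|P packP maxP]; last by [].
by apply/packingP; split => S; rewrite inE.
Qed.

Lemma max_packing_meets (W S : {set 'I_n}) : S \subset W -> #|S| = s ->
  exists2 S0, S0 \in max_packing W & k.-1 <= #|S :&: S0|.
Proof.
move=> sSW cardS; have [packP maxP] := max_packingP W.
set P := max_packing W in packP maxP *.
case: (boolP [exists S0 in P, k.-1 <= #|S :&: S0|]) => [/exists_inP // | noMeet].
have meetS S0 : S0 \in P -> #|S :&: S0| < k.-1.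
  by move=> S0P; rewrite ltnNge; apply: contra noMeet => meet; apply/exists_inP; exists S0.
have SnP : S \notin P by apply/negP => /meetS; rewrite setIid cardS; lia.
suff /maxP : packing W (S |: P) by rewrite cardsU1 SnP ltnn.
have [sizeP meetP] := packingP _ _ packP; apply/packingP; split.
  by move=> S1 /setU1P [-> | /sizeP].
move=> S1 S2 /setU1P [-> | S1P] /setU1P [-> | S2P]; rewrite ?eqxx //.
- by move=> _; apply: meetS.
- by move=> _; rewrite setIC; apply: meetS.
- exact: meetP.
Qed.

(* Every s-subset of [W] shares [k - 1] points with a member of the maximal
   packing, so it lies above one of the (k-1)-subsets of that member. *)
Lemma bin_le_packing (W : {set 'I_n}) :
  'C(#|W|, s) <= #|max_packing W| * ('C(s, k.-1) * 'C(#|W|, s - k.-1)).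
Proof.
have [/packingP [sizeP _] _] := max_packingP W.
set P := max_packing W in sizeP *.
pose supersets (A : {set 'I_n}) :=
  [set S : {set 'I_n} | [&& S \subset W, #|S| == s & A \subset S]].
have cover : [set S : {set 'I_n} | S \subset W & #|S| == s] \subset
    \bigcup_(S0 in P) \bigcup_(A in shadow S0) supersets A.
  apply/subsetP => S; rewrite inE => /andP [sSW /eqP cardS].
  have [S0 S0P meet] := max_packing_meets sSW cardS.
  have [A] : exists A, A \in [set A : {set 'I_n} | A \subset S :&: S0 & #|A| == k.-1].
    by apply/set0Pn; rewrite -card_gt0 cards_draws bin_gt0.
  rewrite inE => /andP [sAS /eqP cardA].
  apply/bigcupP; exists S0 => //; apply/bigcupP; exists A.
    by rewrite inE cardA eqxx andbT (subset_trans sAS) ?subsetIr.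
  by rewrite inE sSW cardS eqxx (subset_trans sAS) ?subsetIl.
rewrite -cards_draws; apply: leq_trans (subset_leq_card cover) _.
apply: leq_trans (leq_card_bigcup _ _) _; rewrite -sum_nat_const; apply: leq_sum => S0 S0P.
apply: leq_trans (leq_card_bigcup _ _) _.
rewrite -(card_shadow (sizeP S0 S0P).2) -sum_nat_const; apply: leq_sum => A.
by rewrite inE => /andP [_ /eqP <-]; apply: card_supersets.
Qed.

Lemma max_packing_large (W : {set 'I_n}) : s <= #|W| ->
  #|W| ^ k.-1 <= #|max_packing W| * ('C(s, k.-1) * s`! * s ^ s).
Proof.
set M := #|W|; set P := max_packing W => le_sM.
have Me_gt0 : 0 < M ^ (s - k.-1) by rewrite expn_gt0; apply/orP; left; lia.
rewrite -(leq_pmul2r Me_gt0) -expnD subnKC; last by lia.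
apply: leq_trans (leq_exp_bin _ le_sM) _; first by lia.
have le_bin : 'C(M, s) <= #|P| * ('C(s, k.-1) * M ^ (s - k.-1)).
  apply: leq_trans (bin_le_packing W) _.
  by rewrite leq_mul2l leq_mul2l leq_bin_exp !orbT.
apply: leq_trans (leq_mul (leqnn (s`! * s ^ s)) le_bin) _; rewrite eq_leq //; lia.
Qed.

(* The number of colourings of a shadow; exactly one of them is the pattern. *)
Local Notation N := (r ^ 'C(s, k.-1)).

(* Each member of the packing cuts the number of colourings by the factor
   [(N - 1) / N], independently of the others since their shadows are disjoint. *)
Lemma card_unpatterned (W : {set 'I_n}) (P : {set {set 'I_n}}) : packing W P ->
  #|[set chi : colouring | [forall S in P, ~~ patterned S chi]]| * N ^ #|P|
    <= (N - 1) ^ #|P| * #|{: colouring}|.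
Proof.
move cardP : #|P| => m; elim: m P cardP => [|m IH] P cardP packP.
  by rewrite !expn0 muln1 mul1n max_card.
have [S0 S0P] : exists S0, S0 \in P by apply/card_gt0P; rewrite cardP.
have [sizeP meetP] := packingP _ _ packP.
pose Q chi := [forall S in P :\ S0, ~~ patterned S chi].
have IHQ : #|[set chi | Q chi]| * N ^ m <= (N - 1) ^ m * #|{: colouring}|.
  apply: IH (packingS (subD1set P S0) packP).
  by move: cardP; rewrite (cardsD1 S0) S0P => [[]].
have Q_indep (chi chi' : colouring) :
    (forall f, f \notin shadow S0 -> chi f = chi' f) -> Q chi = Q chi'.
  move=> agree; apply: eq_forallb_in => S /setD1P [nSS0 SP]; congr negb.
  apply: eq_forallb_in => f fS; rewrite agree //; apply/negP => fS0.
  move: fS fS0 (meetP _ _ SP S0P nSS0).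
  rewrite !inE => /andP [sfS /eqP <-] /andP [sfS0 _].
  by rewrite ltnNge subset_leq_card // subsetI sfS sfS0.
have fix_pattern := leq_card_agree_on ord0 (pattern S0) Q_indep.
rewrite card_ord (card_shadow (sizeP S0 S0P).2) in fix_pattern.
have -> : [set chi | [forall S in P, ~~ patterned S chi]] =
    [set chi | Q chi && ~~ patterned S0 chi].
  apply/setP => chi; rewrite !inE; apply/forall_inP/andP => [allP | [QP nS0] S SP].
    by split; [apply/forall_inP => S /setD1P [_ SP]; apply: allP | apply: allP].
  by case: (eqVneq S S0) => [-> // | nSS0]; apply: (forall_inP QP); rewrite in_setD1 nSS0.
have split_Q : #|[set chi | Q chi && ~~ patterned S0 chi]| +
    #|[set chi | Q chi && patterned S0 chi]| = #|[set chi | Q chi]|.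
  rewrite -(cardsID [set chi | patterned S0 chi] [set chi | Q chi]) addnC.
  by congr (_ + _); apply: eq_card => chi; rewrite !inE // andbC.
have N_gt0 : 0 < N by rewrite expn_gt0.
set a := #|[set chi | Q chi && ~~ _]| in split_Q *.
set b := #|[set chi | Q chi && _]| in split_Q fix_pattern.
set q := #|[set chi | Q chi]| in split_Q fix_pattern IHQ.
have aN : a * N <= q * (N - 1) by nia.
rewrite !expnS; apply: (@leq_trans (q * (N - 1) * N ^ m)).
  by rewrite mulnA; apply: leq_mul.
rewrite mulnAC mulnC -mulnA; exact: leq_mul.
Qed.

Lemma N_gt1 : 1 < N.
Proof. by rewrite -[1](exp1n 'C(s, k.-1)) ltn_exp2r // bin_gt0; lia. Qed.

Lemma max_packing_ge (W : {set 'I_n}) l :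
  s <= #|W| -> 'C(s, k.-1) * s`! * s ^ s * N * l.+1 <= #|W| ^ (k - 2) ->
  N * (l.+1 * #|W|) <= #|max_packing W|.
Proof.
set M := #|W| => le_sM le_M.
have c_gt0 : 0 < 'C(s, k.-1) * s`! * s ^ s.
  by rewrite !muln_gt0 bin_gt0 fact_gt0 expn_gt0 andbT; apply/andP; split; lia.
rewrite -(leq_pmul2l c_gt0) [_ * #|_|]mulnC; apply: leq_trans _ (max_packing_large le_sM).
have -> : M ^ k.-1 = M ^ (k - 2) * M by rewrite -expnSr; congr (_ ^ _); lia.
by apply: leq_trans (leq_mul le_M (leqnn M)); rewrite eq_leq //; lia.
Qed.

Lemma card_unpatterned_le (W : {set 'I_n}) (P : {set {set 'I_n}}) t :
  packing W P -> t <= #|P| ->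
  #|[set chi : colouring | [forall S in P, ~~ patterned S chi]]| * N ^ t
    <= (N - 1) ^ t * #|{: colouring}|.
Proof.
move=> packP le_tP.
have [P'] : exists P', P' \in [set P' : {set {set 'I_n}} | P' \subset P & #|P'| == t].
  by apply/set0Pn; rewrite -card_gt0 cards_draws bin_gt0.
rewrite inE => /andP [sP'P /eqP <-].
apply: leq_trans (card_unpatterned (packingS sP'P packP)).
rewrite leq_mul2r subset_leq_card ?orbT //; apply/subsetP => chi.
by rewrite !inE => /forall_inP unpat; apply/forall_inP => S /(subsetP sP'P); apply: unpat.
Qed.

Lemma exists_good_colouring M l : s <= M ->
  'C(s, k.-1) * s`! * s ^ s * N * l.+1 <= M ^ (k - 2) -> n < 2 ^ l.+1 ->
  exists chi : colouring, forall W : {set 'I_n}, #|W| = M -> has_clique k (graph_of chi) s W.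
Proof.
move=> le_sM le_M lt_n; set j := l.+1 * M; set T0 := N * j.
pose bad W := [set chi : colouring | [forall S in max_packing W, ~~ patterned S chi]].
pose Bad := \bigcup_(W : {set 'I_n} | #|W| == M) bad W.
have union : #|Bad| * N ^ T0 <= 'C(n, M) * ((N - 1) ^ T0 * #|{: colouring}|).
  apply: leq_trans (leq_mul (leq_card_bigcup _ _) (leqnn _)) _.
  have -> : 'C(n, M) = #|[set W : {set 'I_n} | #|W| == M]| by rewrite card_draws card_ord.
  rewrite big_distrl -sum_nat_const [X in _ <= X](eq_bigl (fun W : {set 'I_n} => #|W| == M)).
    apply: leq_sum => W /eqP cardW; have [packP _] := max_packingP W.
    apply: card_unpatterned_le packP _; rewrite /T0 /j -cardW.
    by apply: max_packing_ge; rewrite cardW.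
  by move=> W; rewrite inE.
have pow2 : (N - 1) ^ T0 * 2 ^ j <= N ^ T0.
  rewrite (expnM (N - 1)) (expnM N) -expnMn.
  by apply/leq_expn2r/leq_exp_subn1_mul2; exact: ltnW N_gt1.
have bin_lt : 'C(n, M) < 2 ^ j.
  by apply: leq_ltn_trans (leq_bin_exp n M) _; rewrite /j expnM ltn_exp2r //; lia.
have col_gt0 : 0 < #|{: colouring}| by apply/card_gt0P; exists [ffun _ => ord0].
have ltBad : #|Bad| < #|{: colouring}|.
  rewrite -(ltn_pmul2r (_ : 0 < N ^ T0)) ?expn_gt0 ?(ltnW N_gt1) //.
  apply: leq_ltn_trans union _.
  apply: (@leq_trans (2 ^ j * ((N - 1) ^ T0 * #|{: colouring}|))).
    by rewrite ltn_pmul2r // muln_gt0 col_gt0 expn_gt0 subn_gt0 N_gt1.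
  by rewrite mulnA (mulnC (2 ^ j)) (mulnC #|{: colouring}|) leq_mul2r pow2 orbT.
have /subsetPn [chi _ chiNB] : ~~ ([set: colouring] \subset Bad).
  by apply: contraL ltBad => /subset_leq_card; rewrite cardsT -leqNgt.
exists chi => W cardW; apply: contraNT chiNB => noClique.
apply/bigcupP; exists W; rewrite ?cardW // inE; apply/forall_inP => S SP.
apply: contra noClique; have [/packingP [sizeP _] _] := max_packingP W.
by have [sSW cardS] := sizeP S SP; apply: patterned_has_clique.
Qed.

Lemma f_kst_le_clique_size chi M :
  (forall W : {set 'I_n}, #|W| = M.+1 -> has_clique k (graph_of chi) s W) ->
  f_kst k s s.+1 n <= M.
Proof.
move=> cliqueM; have chi_admissible : kuniform k (graph_of chi) &&
    ~~ has_clique k (graph_of chi) s.+1 setT.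
  by rewrite graph_of_uniform graph_of_clique_free.
rewrite /f_kst; apply: leq_trans (@geq_bigmin_cond _ _ _ n (graph_of chi) chi_admissible) _.
apply/bigmax_leqP => W noClique; rewrite leqNgt; apply: contra noClique => lt_MW.
have [A] : exists A, A \in [set A : {set 'I_n} | A \subset W & #|A| == M.+1].
  by apply/set0Pn; rewrite -card_gt0 cards_draws bin_gt0.
by rewrite inE => /andP [sAW /eqP cardA]; apply: has_clique_mono sAW (cliqueM A cardA).
Qed.

Lemma f_kst_bound l : n < 2 ^ l.+1 -> exists a, f_kst k s s.+1 n <= a /\
  a ^ (k - 2) <= s ^ (k - 2) + 'C(s, k.-1) * s`! * s ^ s * N * l.+1.
Proof.
move=> lt_n; set K := 'C(s, k.-1) * s`! * s ^ s * N.
have exM : exists M, (s <= M.+1) && (K * l.+1 <= M.+1 ^ (k - 2)).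
  exists (s + K * l.+1); rewrite ltnW ?ltnS ?leq_addr //=.
  apply: leq_trans (leq_addl s _) _; apply: leq_trans (leqnSn _) _.
  by rewrite -[X in X <= _]expn1 leq_pexp2l //; lia.
have [M /andP [le_sM le_M] minM] := ex_minnP exM.
have [chi cliqueM] := exists_good_colouring le_sM le_M lt_n.
exists M; split; first exact: f_kst_le_clique_size cliqueM.
case: (ltnP M s) => [lt_s | le_s].
  by apply: leq_trans (leq_addr _ _); apply/leq_expn2r/ltnW.
apply: leq_trans (leq_addl _ _); rewrite leqNgt; apply/negP => lt_K.
have M_gt0 : 0 < M by lia.
by move: (minM M.-1); rewrite prednK // le_s (ltnW lt_K) => /(_ isT); lia.
Qed.

End Construction.

Theorem mainTheorem4 (k s : nat) (hk : (3 <= k)%N) (hks : (k <= s)%N) :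
  exists C : R, (0 < C)%R /\
    forall n : nat, (2 <= n)%N ->
      (INR (f_kst k s s.+1 n) <= C * Rpower (ln (INR n)) (1 / INR (k - 2)))%R.
Proof.
have d_gt0 : 0 < k - 2 by lia.
have [C [C_gt0 log_bound]] := root_log_bound (s ^ (k - 2))
  ('C(s, k.-1) * s`! * s ^ s * (s - k).+2 ^ 'C(s, k.-1)) d_gt0.
exists C; split => // n n_ge2.
have [a [f_le_a a_le]] := f_kst_bound hk hks (trunc_log_ltn n (isT : 1 < 2)).
apply: (Rle_trans _ (INR a)); first exact/le_INR/leP.
by apply: log_bound a_le => //; apply: trunc_logP; lia.
Qed.
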